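(* If $G$ is a graph with a min-max clique covering satisfying simple intersection, then its compressed cliques graph $\mathcal{C}(G)$ does not contain a suspended cycle.
   Context: A clique covering of a graph is a set of cliques such that every edge lies in at least one of them; $\operatorname{cc}(G)$ is its minimum size. A min-max clique covering is a clique covering of size $\operatorname{cc}(G)$ consisting of maximal cliques; it has simple intersection if no three distinct cliques of it share a vertex. Given such a covering $\{C_1,\dots,C_\ell\}$, put $C_{i,j}=C_i\cap C_j$ ($i\ne j$) and $C_{i,i}=C_i\setminus\bigcup_{j\ne i}C_j$; the compressed cliques graph $\mathcal{C}(G)$ has a vertex $v_{i,j}$ for each non-empty $C_{i,j}$ (including $i=j$), with $v_{i,j}\sim v_{i',j'}$ iff $\{i,j\}\cap\{i',j'\}\ne\emptyset$. A cycle $u_1u_2\cdots u_tu_1$ in a graph $X$ is suspended if exactly one of $u_1,\dots,u_t$ has degree larger than two in $X$ and all the others have degree two in $X$. *)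

From mathcomp Require Import all_boot.
Set Implicit Arguments. Unset Strict Implicit. Unset Printing Implicit Defensive.

Section Defs.
Variable T : finType.
Variable e : rel T.

Definition is_clique (C : {set T}) : bool :=
  [forall x in C, forall y in C, (x != y) ==> e x y].

Definition is_maximal_clique (C : {set T}) : bool :=
  is_clique C && [forall D : {set T}, (is_clique D && (C \subset D)) ==> (D == C)].

Definition clique_covering (P : {set {set T}}) : bool :=
  [forall C in P, is_clique C] &&
  [forall x, forall y, e x y ==> [exists C in P, (x \in C) && (y \in C)]].

(* cc(G): the minimum size of a clique covering (the index #|{set {set T}}| is
   an upper bound on #|P| for every P, and coverings always exist). *)
Definition cc : nat :=
  \big[minn/#|{set {set T}}|]_(P : {set {set T}} | clique_covering P) #|P|.

Definition minmax_clique_covering (P : {set {set T}}) : Prop :=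
  clique_covering P /\ #|P| = cc /\ (forall C, C \in P -> is_maximal_clique C).

Definition simple_intersection (P : {set {set T}}) : Prop :=
  forall A B C, A \in P -> B \in P -> C \in P ->
    A != B -> B != C -> A != C -> A :&: B :&: C = set0.
End Defs.

Section Compressed.
Variable T : finType.
Variable P : {set {set T}}.

(* The vertex v_{i,j} (unordered pair {i,j},
   possibly i = j) is encoded as the set {C_i, C_j} of cliques of P:
   - a singleton {C} stands for v_{i,i}, present iff C_{i,i} = C \ U_{D != C} D
     is nonempty;
   - a pair {A, B} (A != B) stands for v_{i,j}, present iff A :&: B is nonempty. *)
Definition private_part (C : {set T}) : {set T} :=
  C :\: \bigcup_(D in P | D != C) D.

Definition cvertex (S : {set {set T}}) : bool :=
  (S \subset P) &&
  [|| [exists C, (S == [set C]) && (private_part C != set0)]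
    | [exists A, exists B, [&& A != B, S == [set A; B] & A :&: B != set0]]].

Definition cverts : {set {set {set T}}} := [set S | cvertex S].

Definition cadj : rel {set {set T}} :=
  fun S S' => [&& S \in cverts, S' \in cverts, S != S' & S :&: S' != set0].
End Compressed.

Section Suspended.
Variable U : finType.
Variable V : {set U}.
Variable adj : rel U.

Definition degree (u : U) : nat := #|[set w in V | adj u w]|.

Definition suspended_cycle (s : seq U) : Prop :=
  [/\ uniq s && (3 <= size s), all (fun u => u \in V) s, cycle adj s,
      count (fun u => 2 < degree u) s = 1 &
      all (fun u => (2 < degree u) || (degree u == 2)) s].
End Suspended.

(* A maximal clique A is
   not contained in another clique B, so whenever {A, B} is a vertex of C(G),
   A also lies in a second vertex of C(G).  Let w be the vertex of degree > 2
   of a suspended cycle, v1, v2 the two vertices after it and vp, vpp the two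
   before it.  As v1 and v2 have degree 2, some clique N of w lies in no vertex
   of C(G) other than v1 and w; likewise some clique N' of w lies only in vp
   and w.  Then w = {N, N'}, so every neighbour of w is v1 or vp, contradicting
   deg w > 2. *)

From mathcomp Require Import all_boot.
Set Implicit Arguments. Unset Strict Implicit. Unset Printing Implicit Defensive.

Lemma count_eq1_inj (U : eqType) (p : pred U) (s : seq U) x y :
  count p s = 1 -> x \in s -> y \in s -> p x -> p y -> x = y.
Proof.
move=> cnt xs ys px py.
have : x \in filter p s by rewrite mem_filter px xs.
have : y \in filter p s by rewrite mem_filter py ys.
move: cnt; rewrite -size_filter.
by case: (filter p s) => [|z [|]] //= _; rewrite !inE => /eqP-> /eqP->.
Qed.

Lemma next_neq_prev (U : eqType) (s : seq U) x :
  uniq s -> 2 < size s -> x \in s -> next s x != prev s x.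
Proof.
move=> us ss /rot_to[i q Eq].
rewrite -(next_rot i us) -(prev_rot i us) Eq.
have : uniq (x :: q) by rewrite -Eq rot_uniq.
have : 2 < size (x :: q) by rewrite -Eq size_rot.
case: q {Eq} => [|a [|b q]] // _ /andP[xq /andP[aq _]].
rewrite prev_nth mem_head (memNindex xq) /= eqxx -[size q]/(size (b :: q)).-1.
by rewrite nth_last /=; apply/eqP => ha; rewrite ha mem_last in aq.
Qed.

Lemma uniq_cycle_neighbours (U : eqType) (r : rel U) (s : seq U) w :
  uniq s -> 2 < size s -> cycle r s -> w \in s ->
  exists v1 v2 vp vpp,
    [/\ [&& v1 \in s, v2 \in s, vp \in s & vpp \in s],
        [&& r w v1, r v1 v2, r vp w & r vpp vp], v1 != vp, v2 != w & vpp != w].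
Proof.
move=> us ss cs ws; have v1vp := next_neq_prev us ss ws.
exists (next s w), (next s (next s w)), (prev s w), (prev s (prev s w)).
split; rewrite ?mem_next ?mem_prev ?ws //.
- by rewrite !(next_cycle cs) ?(prev_cycle cs) ?mem_next ?mem_prev.
- by apply: contra_neq v1vp => v2E; rewrite -[in RHS]v2E (prev_next us).
by apply: contra_neq v1vp => vppE; rewrite -[in LHS]vppE (next_prev us).
Qed.

Lemma card_le2_cases (U : finType) (A : {set U}) a b c :
  #|A| <= 2 -> a \in A -> b \in A -> c \in A -> a != b -> c = a \/ c = b.
Proof.
move=> cardA aA bA cA ab.
have /eqP AE : [set a; b] == A by rewrite eqEcard subUset !sub1set aA bA cards2 ab.
by move: cA; rewrite -AE !inE => /orP[] /eqP; [left | right].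
Qed.

Section CompressedCliquesGraph.

Variables (T : finType) (e : rel T) (P : {set {set T}}).
Hypothesis P_maximal : forall C, C \in P -> is_maximal_clique e C.

Local Notation deg := (degree (cverts P) (cadj P)).

Definition cverts_through (N : {set T}) : {set {set {set T}}} :=
  [set S in cverts P | N \in S].

Lemma cverts1 C : C \in P -> private_part P C != set0 -> [set C] \in cverts P.
Proof.
move=> CP privC; rewrite inE /cvertex sub1set CP.
by apply/orP; left; apply/existsP; exists C; rewrite eqxx.
Qed.

Lemma cverts2 A B :
  A \in P -> B \in P -> A != B -> A :&: B != set0 -> [set A; B] \in cverts P.
Proof.
move=> AP BP AB ABn0; rewrite inE /cvertex subUset !sub1set AP BP.
by apply/orP; right; apply/existsP; exists A; apply/existsP; exists B; rewrite AB eqxx.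
Qed.

Lemma cverts_sub S : S \in cverts P -> S \subset P.
Proof. by rewrite inE => /andP[]. Qed.

Lemma cverts_mem_cases S N : S \in cverts P -> N \in S ->
  S = [set N] \/ exists2 M, M != N & S = [set N; M].
Proof.
rewrite inE => /andP[_ /orP[/existsP[C /andP[/eqP-> _]] | /existsP[A /existsP[B]]]].
  by rewrite inE => /eqP->; left.
case/and3P => AB /eqP-> _; rewrite !inE => /orP[] /eqP->; right.
  by exists B; rewrite 1?eq_sym.
by exists A; rewrite 1?setUC.
Qed.

Lemma cverts_pair_eq S N M :
  S \in cverts P -> N \in S -> M \in S -> M != N -> S = [set N; M].
Proof.
move=> SV NS MS MN; case: (cverts_mem_cases SV NS) => [SE | [M' _ SE]].
  by move: MS MN; rewrite SE inE => /eqP->; rewrite eqxx.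
by move: MS MN; rewrite SE !inE => /orP[] /eqP->; rewrite ?eqxx.
Qed.

Lemma cadj_sym : symmetric (cadj P).
Proof. by move=> S S'; rewrite /cadj andbCA eq_sym setIC. Qed.

Lemma cadjP S S' : reflect
  [/\ S \in cverts P, S' \in cverts P, S != S' & exists2 C, C \in S & C \in S']
  (cadj P S S').
Proof.
apply: (iffP and4P) => [[-> -> -> /set0Pn[C]] | [-> -> -> [C CS CS']]].
  by rewrite inE => /andP[CS CS']; split=> //; exists C.
by split=> //; apply/set0Pn; exists C; rewrite inE CS CS'.
Qed.

Lemma deg_le2_neighbours S S1 S2 S3 : deg S <= 2 ->
  cadj P S S1 -> cadj P S S2 -> cadj P S S3 -> S1 != S2 -> S3 = S1 \/ S3 = S2.
Proof.
have nbr S' : cadj P S S' -> S' \in [set S' in cverts P | cadj P S S'].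
  by move=> adjS; rewrite inE adjS andbT; case/cadjP: adjS.
by move=> degS /nbr S1n /nbr S2n /nbr S3n; apply: (card_le2_cases degS S1n S2n S3n).
Qed.

(* Maximality rules out [A \subset B]; a vertex of [A] outside [B] lies in the
   private part of [A] or in a third clique. *)
Lemma exists_other_cvertex A B : [set A; B] \in cverts P -> A != B ->
  exists S, [/\ S \in cverts P, A \in S & S != [set A; B]].
Proof.
move=> ABV AB; have /subsetP sABP := cverts_sub ABV.
have [AP BP] : A \in P /\ B \in P by rewrite !sABP // !inE eqxx ?orbT.
have /subsetPn[x xA xB] : ~~ (A \subset B).
  case/andP: (P_maximal AP) => _ /forallP/(_ B).
  case/andP: (P_maximal BP) => -> _ /=.
  by apply: contraL => ->; rewrite eq_sym.
case: (boolP (x \in \bigcup_(D in P | D != A) D)) => [|xpriv].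
  case/bigcupP=> D /andP[DP DA] xD.
  exists [set A; D]; split; rewrite ?set21 //.
    apply: cverts2 => //; first by rewrite eq_sym.
    by apply/set0Pn; exists x; rewrite inE xA.
  apply: contraNneq xB => ADAB; suff <- : D = B by [].
  have : D \in [set A; B] by rewrite -ADAB set22.
  by rewrite !inE (negbTE DA) => /eqP.
exists [set A]; split; rewrite ?set11 //.
  by apply: cverts1 => //; apply/set0Pn; exists x; rewrite inE xpriv.
apply: contraNneq AB => AAB; have : B \in [set A] by rewrite AAB set22.
by rewrite inE eq_sym.
Qed.

(* [v] is a pair {C, Z}: besides {C} and [w], it is adjacent to the second
   vertex through [Z]. *)
Lemma singleton_path_deg_gt2 (w v : {set {set T}}) (C : {set T}) :
  cadj P w [set C] -> cadj P [set C] v -> v != w -> 2 < deg v.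
Proof.
move=> /cadjP[wV _ wC [C0 Cw /set1P E0]] /cadjP[CV vV Cv [C1 /set1P E1 Cinv]] vw.
subst C0 C1; rewrite eq_sym in wC.
case: (cverts_mem_cases vV Cinv) => [vE | [Z ZC vE]]; first by rewrite vE eqxx in Cv.
have [S [SV ZS SvZC]] : exists S, [/\ S \in cverts P, Z \in S & S != [set Z; C]].
  by apply: exists_other_cvertex; rewrite // setUC -vE.
have Zv : Z \in v by rewrite vE set22.
have vC : cadj P v [set C].
  by rewrite cadj_sym; apply/cadjP; split=> //; exists C; rewrite ?set11.
have vw' : cadj P v w by apply/cadjP; split=> //; exists C.
have vS : cadj P v S.
  by apply/cadjP; split=> //; [rewrite vE setUC eq_sym | exists Z].
rewrite ltnNge; apply/negP => degv.
have [SC | Sw] := deg_le2_neighbours degv vC vw' vS wC.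
  by move: ZS ZC; rewrite SC inE => ->.
have wE : w = [set C; Z] by apply: cverts_pair_eq; rewrite // -Sw.
by move: vw; rewrite vE -wE eqxx.
Qed.

(* The second vertex through [M] can only be [v], so [N] is not in [v]. *)
Lemma pair_path_cverts_through (N M : {set T}) (w v : {set {set T}}) :
  M != N -> N \in w -> cadj P w [set N; M] -> cadj P [set N; M] v -> v != w ->
  deg [set N; M] <= 2 -> cverts_through N \subset [set [set N; M]; w].
Proof.
move=> MN Nw wNM NMv vw degNM.
have nbr S : cadj P [set N; M] S -> S = w \/ S = v.
  move=> NMS; apply: (deg_le2_neighbours degNM _ NMv NMS).
    by rewrite cadj_sym.
  by rewrite eq_sym.
case/cadjP: (wNM) => wV NMV wNM' _; case/cadjP: (NMv) => _ vV NMv' _.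
have [S' [S'V MS' S'NM]] : exists S', [/\ S' \in cverts P, M \in S' & S' != [set M; N]].
  by apply: exists_other_cvertex; rewrite // setUC.
have Mv : M \in v.
  have : cadj P [set N; M] S'.
    by apply/cadjP; split=> //; [rewrite eq_sym setUC | exists M; rewrite ?set22].
  case/nbr => S'E; last by rewrite -S'E.
  by move: wNM'; rewrite (cverts_pair_eq wV Nw (_ : M \in w) MN) ?eqxx // -S'E.
have Nv : N \notin v.
  by apply: contra NMv' => Nv; rewrite (cverts_pair_eq vV Nv Mv MN).
apply/subsetP => S; rewrite inE => /andP[SV NS].
have [->|SNM] := eqVneq S [set N; M]; first by rewrite set21.
have : cadj P [set N; M] S.
  by apply/cadjP; split=> //; [rewrite eq_sym | exists N; rewrite ?set21].
by case/nbr => SE; [rewrite SE set22 | rewrite SE (negbTE Nv) in NS].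
Qed.

Lemma path_clique_cverts_through (w v1 v2 : {set {set T}}) :
  cadj P w v1 -> cadj P v1 v2 -> v2 != w -> deg v1 <= 2 -> deg v2 <= 2 ->
  exists N, [/\ N \in w, N \in v1 & cverts_through N \subset [set v1; w]].
Proof.
move=> wv1 v1v2 v2w deg1 deg2; case/cadjP: (wv1) => _ v1V _ [N Nw Nv1].
exists N; split=> //; case: (cverts_mem_cases v1V Nv1) => [v1E | [M MN v1E]]; subst v1.
  by move: deg2; rewrite leqNgt (singleton_path_deg_gt2 wv1 v1v2 v2w).
exact: (pair_path_cverts_through MN Nw wv1 v1v2 v2w deg1).
Qed.

Lemma deg_le2_of_cverts_through (w v1 v2 : {set {set T}}) (N1 N2 : {set T}) :
  w \in cverts P -> N1 \in w -> N2 \in w -> N2 != N1 ->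
  cverts_through N1 \subset [set v1; w] -> cverts_through N2 \subset [set v2; w] ->
  deg w <= 2.
Proof.
move=> wV N1w N2w N21 /subsetP thr1 /subsetP thr2.
have wE := cverts_pair_eq wV N1w N2w N21.
apply: (@leq_trans #|[set v1; v2]|); last by rewrite cards2; case: (_ != _).
apply/subset_leq_card/subsetP => S; rewrite inE => /andP[SV /cadjP[_ _ wS [N Nw NS]]].
have SN : S \in cverts_through N by rewrite inE SV NS.
move: Nw; rewrite wE => /set2P[] NE; subst N.
  by case/thr1/set2P: SN => SE; [rewrite SE set21 | rewrite SE eqxx in wS].
by case/thr2/set2P: SN => SE; [rewrite SE set22 | rewrite SE eqxx in wS].
Qed.

End CompressedCliquesGraph.

Theorem mainTheorem19 (T : finType) (e : rel T)
    (e_sym : symmetric e) (e_irr : irreflexive e)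
    (P : {set {set T}}) :
  minmax_clique_covering e P -> simple_intersection P ->
  forall s : seq {set {set T}}, ~ suspended_cycle (cverts P) (cadj P) s.
Proof.
move=> [_ [_ P_max]] _ s [/andP[us ss] _ cs cnt _].
set deg := degree (cverts P) (cadj P).
have [w ws degw] : exists2 w, w \in s & 2 < deg w by apply/hasP; rewrite has_count cnt.
have deg_le2 u : u \in s -> u != w -> deg u <= 2.
  move=> us' uw; rewrite leqNgt; apply: contra uw => degu.
  by apply/eqP; apply: (count_eq1_inj cnt us' ws degu degw).
have [v1 [v2 [vp [vpp []]]]] := uniq_cycle_neighbours us ss cs ws.
case/and4P=> v1s v2s vps vpps /and4P[wv1 v1v2 vpw vppvp] v1vp v2w vppw.
have [wvp vpvpp] : cadj P w vp /\ cadj P vp vpp by split; rewrite cadj_sym.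
have [deg1 degp] : deg v1 <= 2 /\ deg vp <= 2.
  by split; apply: deg_le2; rewrite // eq_sym; [case/cadjP: wv1 | case/cadjP: wvp].
have [deg2 degpp] := (deg_le2 v2 v2s v2w, deg_le2 vpp vpps vppw).
have [N [Nw _ thrN]] := path_clique_cverts_through P_max wv1 v1v2 v2w deg1 deg2.
have [N' [N'w N'vp thrN']] :=
  path_clique_cverts_through P_max wvp vpvpp vppw degp degpp.
have wV : w \in cverts P by case/cadjP: wv1.
have N'N : N' != N.
  apply/eqP => N'E; case/cadjP: (wvp) => _ vpV wvp' _.
  have : vp \in cverts_through P N by rewrite inE vpV -N'E.
  case/(subsetP thrN)/set2P => vpE; first by rewrite vpE eqxx in v1vp.
  by rewrite vpE eqxx in wvp'.
by move: degw; rewrite ltnNge (deg_le2_of_cverts_through wV Nw N'w N'N thrN thrN').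
Qed.
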